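(* Assume Assumption A. Let $(\sigma_i)_{i\in\mathbb{N}}$ be i.i.d. copies of $\sigma_0$ and $i_x:=\min\{i:\sigma_i>x\}$. Then there exists $c>0$ such that for all sufficiently large $x$, \[ \mathbf{E}\big[\sigma_{i_x}^{-1}\big]<c\,x^{-1}g(x). \]
   Context: $\sigma_0$ is a strictly positive random variable under $\mathbf{P}$ and $L(u):=1/\mathbf{P}(\sigma_0>u)$ satisfies $\lim_{u\to\infty}L(uv)/L(u)=1$ for all $v>0$. Assumption A: $L$ is continuous, and there exist functions $g,k$ with $g(u)\to0$ as $u\to\infty$, $g$ eventually monotone decreasing, such that $\lim_{u\to\infty}\big(L(uv)/L(u)-1\big)/g(u)=k(v)$ for every $v>0$, where there exists $v$ with $k(v)\neq0$ and $k(uv)\ne k(u)$ for all $u>0$. *)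

From HB Require Import structures.
From mathcomp Require Import all_boot all_order all_algebra.
From mathcomp Require Import all_classical all_reals all_analysis.
Set Implicit Arguments. Unset Strict Implicit. Unset Printing Implicit Defensive.
Import Order.TTheory GRing.Theory Num.Theory.
Import numFieldNormedType.Exports.
Local Open Scope classical_set_scope.
Local Open Scope ring_scope.

Definition iid_seq d (T : measurableType d) (R : realType) (P : probability T R)
  (X : nat -> {RV P >-> R}) : Prop :=
  (forall (i : nat) (B : set R), measurable B ->
      P (X i @^-1` B) = P (X 0%N @^-1` B)) /\
  (forall (n : nat) (B : nat -> set R), (forall i, measurable (B i)) ->
      P (\bigcap_(i in [set k | (k < n)%N]) (X i @^-1` B i))
      = \prod_(i < n) P (X i @^-1` B i))%E.

Definition tailL d (T : measurableType d) (R : realType) (P : probability T R)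
  (X0 : T -> R) (u : R) : R :=
  (fine (P [set w | u < X0 w]))^-1.

(* i_x(w) := min { i : X_i(w) > x }  (set to 0 on the null event where no such i exists) *)
Definition first_exceed (T : Type) (R : realType) (X : nat -> T -> R) (x : R) (w : T) : nat :=
  match pselect (exists i : nat, x < X i w) with
  | left H => ex_minn H
  | right _ => 0%N
  end.

(* Write S(u) := P(sigma_0 > u) = 1/L(u).  If sigma_(i_x) lies in
   (x 2^m, x 2^(m+1)] its inverse is at most (x 2^m)^-1, so sigma_(i_x)^-1 is
   dominated by sum_m (x 2^m)^-1 1{sigma_(i_x) <= x 2^(m+1)}, up to the null
   event where x is never exceeded.  Summing a geometric series over the value
   of i_x gives P(sigma_(i_x) <= y) = 1 - S(y)/S(x).  Assumption A at v = 2
   gives S(2t) >= S(t) (1 - C g(t)) for large t; iterating along x, 2x, 4x, ...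
   and using that g is eventually nonincreasing, 1 - S(2^n x)/S(x) <= n C g(x).
   Hence E[sigma_(i_x)^-1] <= sum_m (m+1) C g(x) / (2^m x) = 4 C g(x) / x. *)

From HB Require Import structures.
From mathcomp Require Import all_boot all_order all_algebra.
From mathcomp Require Import all_classical all_reals all_analysis.
From mathcomp Require Import measurable_realfun ring lra.
Set Implicit Arguments. Unset Strict Implicit. Unset Printing Implicit Defensive.
Import Order.TTheory GRing.Theory Num.Theory.
Import numFieldNormedType.Exports.
Local Open Scope classical_set_scope.
Local Open Scope ring_scope.

(* The integrand of the theorem is not known to be measurable, so monotonicity
   is taken from the definition of the integral as a supremum over simple
   functions. *)
Lemma ge0_le_integral_nonmeasurable d (T : measurableType d) (R : realType)
  (mu : {measure set T -> \bar R}) (f1 f2 : T -> \bar R) :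
  (forall x, 0 <= f1 x)%E -> (forall x, f1 x <= f2 x)%E ->
  (\int[mu]_x f1 x <= \int[mu]_x f2 x)%E.
Proof.
move=> f10 f12; have f20 x : (0 <= f2 x)%E by exact: le_trans (f10 x) (f12 x).
rewrite !ge0_integralTE //=.
apply: ge_ereal_sup => _ [h /= hf1 <-]; apply: ereal_sup_ubound => /=.
by exists h => //= x; exact: le_trans (hf1 x) (f12 x).
Qed.

Lemma indic_ge0 (T : Type) (R : numDomainType) (A : set T) (w : T) :
  0 <= \1_A w :> R.
Proof. by rewrite indicE ler0n. Qed.

Lemma sumr_geometric_le (R : realType) (r : R) (n : nat) : 0 <= r < 1 ->
  \sum_(i < n) r ^+ i <= (1 - r)^-1.
Proof.
move=> /andP[r0 r1]; have r1_gt0 : 0 < 1 - r by rewrite subr_gt0.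
have telescope : (1 - r) * \sum_(i < n) r ^+ i = 1 - r ^+ n.
  by rewrite -opprB mulNr -subrX1 opprB.
by rewrite -(ler_pM2l r1_gt0) telescope mulfV ?gt_eqF // gerBl exprn_ge0.
Qed.

Lemma sum_dyadic_weights (R : realType) (n : nat) :
  \sum_(m < n) m.+1%:R * 2^-m + 2 * n.+2%:R * 2^-n = 4 :> R.
Proof.
elim: n => [|n IH]; first by rewrite big_ord0 add0r expr0 invr1 mulr1; lra.
by rewrite big_ord_recr /= -IH exprSr -!natr1 invfM; field.
Qed.

Lemma nneseries_dyadic_le (R : realType) (x a : R) (b : nat -> R) : 0 < x ->
  (forall m, 0 <= b m <= m.+1%:R * a) ->
  (\sum_(m <oo) ((x * 2 ^+ m)^-1 * b m)%:E <= (4 * a / x)%:E)%E.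
Proof.
move=> x0 b_bnd.
have w0 m : 0 <= (x * 2 ^+ m)^-1 by rewrite invr_ge0 mulr_ge0 ?exprn_ge0 ?ltW.
have a0 : 0 <= a by have /andP[/le_trans b0 /b0] := b_bnd 0%N; rewrite mul1r.
apply: lime_le.
  by apply: is_cvg_nneseries => m _ _; rewrite lee_fin mulr_ge0 // (andP (b_bnd m)).1.
apply: nearW => n; rewrite sumEFin lee_fin big_mkord.
apply: (@le_trans _ _ (\sum_(m < n) a / x * (m.+1%:R * 2^-m))).
  apply: ler_sum => m _; have /andP[_ bm] := b_bnd m.
  have -> : a / x * (m.+1%:R * 2^-m) = (x * 2 ^+ m)^-1 * (m.+1%:R * a).
    by rewrite invfM; field; rewrite expf_neq0 ?(gt_eqF x0).
  by have := ler_wpM2l (w0 m) bm.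
rewrite -mulr_sumr (_ : 4 * a / x = a / x * 4); last by ring.
apply: ler_wpM2l; first exact: divr_ge0 a0 (ltW x0).
have := sum_dyadic_weights R n.
have : 0 <= 2 * n.+2%:R * 2^-n :> R by rewrite mulr_ge0 ?invr_ge0 ?exprn_ge0.
lra.
Qed.

Lemma dyadic_bracket (R : realType) (x s : R) : 0 < x -> x < s ->
  exists m : nat, x * 2 ^+ m <= s <= x * 2 ^+ m.+1.
Proof.
move=> x0 xs; have s0 : 0 <= s by rewrite ltW // (lt_trans x0).
have ex : exists n, s <= x * 2 ^+ n.+1.
  have [n sn] : exists n : nat, s / x < n%:R.
    exists (Num.Def.archi_bound (s / x)); apply: archi_boundP.
    exact: divr_ge0 s0 (ltW x0).
  exists n; rewrite -ler_pdivrMl // mulrC; apply: le_trans (ltW sn) _.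
  by rewrite -natrX ler_nat ltnW // (ltn_trans (ltnSn n)) // ltn_expl.
case: (ex_minnP ex) => m sm m_min; exists m; rewrite sm andbT.
case: m sm m_min => [|m] _ m_min; first by rewrite expr0 mulr1 ltW.
by rewrite leNgt; apply/negP => /ltW /m_min; rewrite ltnn.
Qed.

Lemma first_exceed_spec (T : Type) (R : realType) (X : nat -> T -> R) x w :
  (exists i, x < X i w) ->
  x < X (first_exceed X x w) w /\
  forall j, (j < first_exceed X x w)%N -> X j w <= x.
Proof.
rewrite /first_exceed => ex; case: pselect => [H|//]; case: ex_minnP => i xi i_min.
by split=> // j ji; rewrite leNgt; apply/negP => /i_min; rewrite leqNgt ji.
Qed.

Lemma first_exceed_never (T : Type) (R : realType) (X : nat -> T -> R) x w :
  ~ (exists i, x < X i w) -> first_exceed X x w = 0%N.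
Proof. by rewrite /first_exceed; case: pselect. Qed.

Definition survival d (T : measurableType d) (R : realType) (P : probability T R)
  (X : T -> R) (u : R) : R := fine (P [set w | u < X w]).

Section first_exceedance.
Variables (R : realType) (d : measure_display) (T : measurableType d).
Variables (P : probability T R) (sigma : nat -> {RV P >-> R}).
Hypothesis sigma_iid : iid_seq sigma.
Hypothesis sigma0_gt0 : forall w, 0 < sigma 0%N w.

Let S := survival P (sigma 0%N).

Lemma measurable_sigma_gt i u : measurable [set w | u < sigma i w].
Proof.
have mgt : measurable [set r : R | u < r] by rewrite -set_itvoy; exact: measurable_itv.
exact: (measurable_funPTI (sigma i) mgt).
Qed.

Local Hint Resolve measurable_sigma_gt : core.

Lemma survivalE u : P [set w | u < sigma 0%N w] = (S u)%:E.
Proof. by rewrite fineK // fin_num_measure. Qed.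

Lemma survival_nonincreasing u v : u <= v -> S v <= S u.
Proof.
move=> uv; rewrite -lee_fin -!survivalE; apply: le_measure; rewrite ?inE //.
by move=> w /=; exact: le_lt_trans.
Qed.

Lemma survival_le1 u : S u <= 1.
Proof. by rewrite -lee_fin -survivalE probability_le1. Qed.

Let measurable_le u : measurable [set r : R | r <= u].
Proof. by rewrite -set_itvNyc; exact: measurable_itv. Qed.

Let measurable_oc u v : measurable [set r : R | u < r <= v].
Proof. by rewrite -set_itvoc; exact: measurable_itv. Qed.

Lemma prob_sigma0_le u : P (sigma 0%N @^-1` [set r | r <= u]) = (1 - S u)%:E.
Proof.
rewrite (_ : _ @^-1` _ = ~` [set w | u < sigma 0%N w]).
  by rewrite probability_setC // survivalE EFinB.
by apply/seteqP; split => w /=; rewrite leNgt => /negP.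
Qed.

Lemma prob_sigma0_oc u v : u <= v ->
  P (sigma 0%N @^-1` [set r | u < r <= v]) = (S u - S v)%:E.
Proof.
move=> uv; set A := _ @^-1` _.
have mA : measurable A by exact: measurable_funPTI.
have AU : A `|` [set w | v < sigma 0%N w] = [set w | u < sigma 0%N w].
  apply/seteqP; split => w /=; first by case=> [/andP[]//|]; exact: le_lt_trans.
  by move=> uw; case: (leP (sigma 0%N w) v) => h; [left; apply/andP|right].
have AI : A `&` [set w | v < sigma 0%N w] = set0.
  apply/seteqP; split => w //= [/andP[_ wv] vw].
  by move: (le_lt_trans wv vw); rewrite ltxx.
have : P [set w | u < sigma 0%N w] = (P A + P [set w | (v < sigma 0%N w)%R])%E.
  by rewrite -AU; exact: measureU.
rewrite !survivalE -[P A]fineK ?fin_num_measure // -EFinD => -[->].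
by rewrite addrK.
Qed.

Lemma prob_bigcap_iid n (B : nat -> set R) : (forall i, measurable (B i)) ->
  P (\bigcap_(i in [set k | (k < n)%N]) (sigma i @^-1` B i)) =
  (\prod_(i < n) P (sigma 0%N @^-1` B i))%E.
Proof.
move: sigma_iid => [iidD iidI] mB; rewrite iidI //.
by apply: eq_bigr => i _; rewrite iidD.
Qed.

Definition stays_below x n :=
  \bigcap_(j in [set k | (k < n)%N]) (sigma j @^-1` [set r | r <= x]).

Definition never_exceeds x := \bigcap_j (sigma j @^-1` [set r : R | r <= x]).

Definition first_exceed_at x y i :=
  stays_below x i `&` (sigma i @^-1` [set r | x < r <= y]).

Definition first_exceed_le x y := \bigcup_i first_exceed_at x y i.

Lemma measurable_stays_below x n : measurable (stays_below x n).
Proof. by apply: bigcap_measurableType => j _; exact: measurable_funPTI. Qed.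

Lemma measurable_never_exceeds x : measurable (never_exceeds x).
Proof. by apply: bigcapT_measurable => j; exact: measurable_funPTI. Qed.

Lemma measurable_first_exceed_at x y i : measurable (first_exceed_at x y i).
Proof.
by apply: measurableI; [exact: measurable_stays_below | exact: measurable_funPTI].
Qed.

Lemma measurable_first_exceed_le x y : measurable (first_exceed_le x y).
Proof. by apply: bigcupT_measurable => i; exact: measurable_first_exceed_at. Qed.

Local Hint Resolve measurable_stays_below measurable_never_exceeds : core.
Local Hint Resolve measurable_first_exceed_at measurable_first_exceed_le : core.

Lemma prob_stays_below x n : P (stays_below x n) = ((1 - S x) ^+ n)%:E.
Proof.
rewrite /stays_below prob_bigcap_iid // (eq_bigr (fun _ => (1 - S x)%:E)); last first.
  by move=> j _; rewrite prob_sigma0_le.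
by rewrite prodEFin prodr_const card_ord.
Qed.

Lemma prob_first_exceed_at x y i : x <= y ->
  P (first_exceed_at x y i) = ((1 - S x) ^+ i * (S x - S y))%:E.
Proof.
move=> xy.
pose B j := if (j < i)%N then [set r : R | r <= x] else [set r | x < r <= y].
have -> : first_exceed_at x y i =
    \bigcap_(j in [set k | (k < i.+1)%N]) (sigma j @^-1` B j).
  apply/seteqP; split => w /=.
    by move=> [below xiy] j /=; rewrite ltnS leq_eqVlt => /orP[/eqP->|ji];
      rewrite /B ?ltnn //= ji; exact: below.
  move=> h; split; last by have := h i (ltnSn i); rewrite /B ltnn.
  by move=> j /= ji; have := h j (ltnW ji); rewrite /B ji.
rewrite prob_bigcap_iid; last by move=> j; rewrite /B; case: ifP.
rewrite big_ord_recr /= /B ltnn prob_sigma0_oc //.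
rewrite (eq_bigr (fun _ => (1 - S x)%:E)); last first.
  by move=> j _; rewrite /= ltn_ord prob_sigma0_le.
by rewrite prodEFin prodr_const card_ord -EFinM.
Qed.

Lemma prob_first_exceed_le x y : 0 < S x -> x <= y ->
  (P (first_exceed_le x y) <= (1 - S y / S x)%:E)%E.
Proof.
move=> Sx0 xy.
apply: le_trans (measure_sigma_subadditive P (measurable_first_exceed_at x y)
  (measurable_first_exceed_le x y) (@subset_refl _ _)) _.
apply: lime_le; first by apply: is_cvg_nneseries => n _ _; exact: measure_ge0.
apply: nearW => n; rewrite (eq_bigr _ (fun i _ => prob_first_exceed_at i xy)).
rewrite sumEFin lee_fin -mulr_suml big_mkord.
have Sxy : 0 <= S x - S y by rewrite subr_ge0 survival_nonincreasing.
have r01 : 0 <= 1 - S x < 1 by rewrite subr_ge0 survival_le1 ltrBlDr ltrDl Sx0.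
apply: le_trans (ler_wpM2r Sxy (sumr_geometric_le n r01)) _.
by rewrite subKr mulrBr mulVf ?gt_eqF // mulrC.
Qed.

Lemma prob_never_exceeds x : 0 < S x -> P (never_exceeds x) = 0%E.
Proof.
move=> Sx0; have Sx1 := survival_le1 x.
have le_pow n : (P (never_exceeds x) <= ((1 - S x) ^+ n)%:E)%E.
  rewrite -prob_stays_below; apply: le_measure; rewrite ?inE //.
  by move=> w Nw i _; exact: Nw.
have r1 : `|1 - S x| < 1 by rewrite ger0_norm ?subr_ge0 // ltrBlDr ltrDl.
rewrite -[P _]fineK ?fin_num_measure //; congr EFin.
apply/eqP; rewrite eq_le fine_ge0 ?measure_ge0 // andbT leNgt; apply/negP => Np.
have /cvgr_dist_lt /(_ _ Np) [M _ /(_ M (leqnn M))] := cvg_expr r1.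
rewrite /= sub0r normrN ger0_norm ?exprn_ge0 ?subr_ge0 //.
have := le_pow M; rewrite -[P _]fineK ?fin_num_measure //.
by rewrite lee_fin => /le_lt_trans h /h; rewrite ltxx.
Qed.

Let i_x x w := first_exceed (fun i => sigma i) x w.

(* On the null event where x is never exceeded, i_x is a junk value; there the
   last summand makes the series of majorants infinite. *)
Let majorant x m w : R :=
  (x * 2 ^+ m)^-1 * \1_(first_exceed_le x (x * 2 ^+ m.+1)) w + \1_(never_exceeds x) w.

Let majorant_ge0 x m w : 0 < x -> 0 <= majorant x m w.
Proof.
by move=> x0; rewrite addr_ge0 ?mulr_ge0 ?invr_ge0 ?mulr_ge0 ?exprn_ge0
  ?indic_ge0 ?ltW.
Qed.

Lemma inv_first_exceed_gt0 x w : 0 < x -> 0 < (sigma (i_x x w) w)^-1.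
Proof.
move=> x0; rewrite invr_gt0 /i_x; have [ex|nex] := pselect (exists i, x < sigma i w).
  exact: lt_trans x0 (first_exceed_spec (X := fun i => sigma i) ex).1.
by rewrite first_exceed_never.
Qed.

Lemma inv_first_exceed_le_majorant x w : 0 < x ->
  (((sigma (i_x x w) w)^-1)%:E <= \sum_(m <oo) (majorant x m w)%:E)%E.
Proof.
move=> x0; have mge0 m : (0 <= (majorant x m w)%:E)%E by rewrite lee_fin majorant_ge0.
have [ex|nex] := pselect (exists i, x < sigma i w).
  have [xs below] := first_exceed_spec (X := fun i => sigma i) ex.
  have [M /andP[xMs sM]] := dyadic_bracket x0 xs.
  have inE : first_exceed_le x (x * 2 ^+ M.+1) w.
    by exists (i_x x w) => //; split; [move=> j /= /below | apply/andP].
  apply: le_trans (nneseries_lim_ge M.+1 (fun n _ _ => mge0 n)).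
  rewrite big_nat_recr //= -[X in (X <= _)%E]add0e.
  apply: leeD; first by apply: sume_ge0 => n _; exact: mge0.
  rewrite lee_fin /majorant indicE mem_set // mulr1.
  apply: ler_wpDr; first exact: indic_ge0.
  have s0 : 0 < sigma (i_x x w) w by exact: lt_trans x0 xs.
  by rewrite lef_pV2 ?posrE ?mulr_gt0 ?exprn_gt0.
have Nw : never_exceeds x w.
  by move=> i _; rewrite /= leNgt; apply/negP => h; apply: nex; exists i.
set K := Num.Def.archi_bound (sigma 0%N w)^-1.
apply: le_trans (nneseries_lim_ge K (fun n _ _ => mge0 n)).
rewrite /i_x first_exceed_never // sumEFin lee_fin.
apply: le_trans (ltW (archi_boundP _)) _; first by rewrite invr_ge0 ltW.
have -> : K%:R = \sum_(0 <= i < K) 1 :> R by rewrite sumr_const_nat subn0.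
apply: ler_sum => i _.
by rewrite /majorant [\1_(never_exceeds x) w]indicE mem_set // addrC lerDl
  mulr_ge0 ?invr_ge0 ?mulr_ge0 ?exprn_ge0 ?indic_ge0 ?ltW.
Qed.

Lemma expectation_inv_first_exceed_le x : 0 < x -> 0 < S x ->
  ('E_P[fun w => ((sigma (i_x x w) w)^-1)%R] <=
   \sum_(m <oo) ((x * 2 ^+ m)^-1 * (1 - S (x * 2 ^+ m.+1) / S x))%:E)%E.
Proof.
move=> x0 Sx0.
have c0 m : 0 <= (x * 2 ^+ m)^-1 by rewrite invr_ge0 mulr_ge0 ?exprn_ge0 ?ltW.
have mmaj m : measurable_fun setT (fun w => (majorant x m w)%:E).
  apply/measurable_EFinP; apply: measurable_funD; last exact: measurable_indic.
  by apply: measurable_funM; [exact: measurable_cst | exact: measurable_indic].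
rewrite unlock.
apply: le_trans (ge0_le_integral_nonmeasurable P
  (f2 := fun w => (\sum_(m <oo) (majorant x m w)%:E)%E) _ _) _.
- by move=> w; rewrite lee_fin ltW // inv_first_exceed_gt0.
- by move=> w; exact: inv_first_exceed_le_majorant.
rewrite integral_nneseries //; last by move=> m w _; rewrite lee_fin majorant_ge0.
apply: lee_nneseries => [m _ _|m _].
  by apply: integral_ge0 => w _; rewrite lee_fin majorant_ge0.
have x2 : x <= x * 2 ^+ m.+1 by rewrite ler_peMr ?exprn_ege1 ?ler1n // ltW.
rewrite /majorant; under eq_integral => w _ do rewrite EFinD EFinM.
rewrite ge0_integralD //; last 3 first.
- by move=> w _; rewrite lee_fin mulr_ge0 ?indic_ge0.
- by apply/measurable_EFinP; apply: measurable_funM;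
    [exact: measurable_cst | exact: measurable_indic].
- by apply/measurable_EFinP; exact: measurable_indic.
rewrite ge0_integralZl_EFin //; last first.
  by apply/measurable_EFinP; exact: measurable_indic.
rewrite !integral_indic //.
rewrite !setIT; set Pnever := (X in (_ + X)%E).
rewrite (_ : Pnever = 0%E) ?adde0; last exact: prob_never_exceeds.
by rewrite EFinM lee_wpmul2l ?lee_fin //; exact: prob_first_exceed_le.
Qed.

End first_exceedance.

Section survival_decrement.
Variables (R : realType) (S g k : R -> R) (u0 : R).
Hypothesis S_gt0 : forall u, 0 < S u.
Hypothesis S_nonincreasing : forall u v, u <= v -> S v <= S u.
Hypothesis g_cvg0 : g u @[u --> +oo] --> (0 : R).
Hypothesis g_nonincreasing : forall a b, u0 <= a -> a <= b -> g b <= g a.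
Hypothesis ratio_cvg : forall v, 0 < v ->
  (((S (u * v))^-1 / (S u)^-1 - 1) / g u) @[u --> +oo] --> k v.
Hypothesis k_neq0 : exists2 v, 0 < v & k v != 0.

Lemma g_ge0 a : u0 <= a -> 0 <= g a.
Proof.
move=> u0a; rewrite leNgt; apply/negP => ga.
have /cvgr_dist_lt /(_ (- g a)) := g_cvg0; rewrite oppr_gt0 => /(_ ga) near_ga.
have [t [gt_close at_]] := filter_ex (filterI near_ga (nbhs_pinfty_ge (num_real a))).
have := g_nonincreasing u0a at_.
move: gt_close; rewrite sub0r normrN ltr0_norm; first lra.
exact: le_lt_trans (g_nonincreasing u0a at_) ga.
Qed.

(* If g vanished at some a >= u0 it would vanish beyond a, and the ratio,
   divided by 0, would converge to 0 instead of k v. *)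
Lemma g_gt0 a : u0 <= a -> 0 < g a.
Proof.
move=> u0a; rewrite lt_neqAle g_ge0 // andbT; apply/negP => /eqP ga0.
have gz t : a <= t -> g t = 0.
  move=> at_; apply/eqP; rewrite eq_le g_ge0 ?(le_trans u0a) // andbT.
  by rewrite ga0 g_nonincreasing.
case: k_neq0 => v v0 kv.
have /cvgr_dist_lt /(_ `|k v|) := ratio_cvg v0; rewrite normr_gt0 => /(_ kv) near_kv.
have [t [+ at_]] := filter_ex (filterI near_kv (nbhs_pinfty_ge (num_real a))).
by rewrite gz // invr0 mulr0 subr0 ltxx.
Qed.

Lemma survival_double_ge : exists2 C, 0 < C &
  \forall t \near +oo, S t - C * g t * S t <= S (t * 2).
Proof.
have /cvgr_dist_lt /(_ 1 ltr01) near_k2 := ratio_cvg (ltr0Sn _ 1).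
pose C := `|k 2| + 1; have C0 : 0 < C by rewrite ltr_pwDr.
exists C => //.
move: near_k2 (nbhs_pinfty_ge (num_real (Num.max u0 1))); apply: filterS2 => t.
rewrite ge_max ltr_distlC => /andP[_ ratio_lt] /andP[u0t t1].
have gt := g_gt0 u0t; have S2 := S_gt0 (t * 2).
have S21 : S (t * 2) <= S t by apply: S_nonincreasing; rewrite ler_peMr ?ler1n //; lra.
have ratio_le : ((S (t * 2))^-1 / (S t)^-1 - 1) / g t <= C.
  by apply: le_trans (ltW ratio_lt) _; rewrite /C; have := ler_norm (k 2); lra.
rewrite ler_pdivrMr // invrK mulrC -(ler_pM2r S2) mulrBl mul1r
  (divfK (lt0r_neq0 S2)) in ratio_le.
have := ler_wpM2l (mulr_ge0 (ltW C0) (ltW gt)) S21; lra.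
Qed.

(* The errors of the doubling steps along x, 2x, 4x, ... add up to at most
   n C g(x) because g is nonincreasing. *)
Lemma survival_dyadic_decrement C X : 0 < C -> u0 <= X -> 0 <= X ->
  (forall t, X <= t -> S t - C * g t * S t <= S (t * 2)) ->
  forall x n, X <= x -> 1 - S (x * 2 ^+ n) / S x <= n%:R * (C * g x).
Proof.
move=> C0 u0X X0 step x n Xx.
have u0x : u0 <= x by exact: le_trans Xx.
suff : S x * (1 - n%:R * (C * g x)) <= S (x * 2 ^+ n).
  by rewrite mulrC -ler_pdivlMr //; lra.
elim: n => [|n IH]; first by rewrite mul0r subr0 mulr1 expr0 mulr1.
have xy : x <= x * 2 ^+ n by rewrite ler_peMr ?exprn_ege1 ?ler1n //; lra.
have := step _ (le_trans Xx xy); rewrite exprSr [x * (_ * 2)]mulrA.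
have gyx := g_nonincreasing u0x xy; have Syx := S_nonincreasing xy.
have Sy0 := S_gt0 (x * 2 ^+ n); have gy0 := g_ge0 (le_trans u0x xy).
have : C * g (x * 2 ^+ n) * S (x * 2 ^+ n) <= C * g x * S x.
  have Cg := ler_wpM2l (ltW C0) gyx.
  apply: le_trans (ler_wpM2r (ltW Sy0) Cg) _.
  have Cgx0 := mulr_ge0 (ltW C0) (g_ge0 u0x).
  by have := ler_wpM2l Cgx0 Syx.
rewrite -[n.+1%:R]natr1; lra.
Qed.

End survival_decrement.

Theorem lemma3p3 (R : realType) (d : measure_display) (T : measurableType d)
  (P : probability T R) (sigma : nat -> {RV P >-> R}) (g k : R -> R) :
  (forall w, 0 < sigma 0%N w) ->
  (forall u : R, (0 < P [set w | (u < sigma 0%N w)%R])%E) ->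
  (forall v : R, 0 < v ->
     (tailL P (sigma 0%N) (u * v) / tailL P (sigma 0%N) u) @[u --> +oo] --> (1:R)) ->
  {in `]0, +oo[, continuous (tailL P (sigma 0%N))} ->
  (g u) @[u --> +oo] --> (0:R) ->
  (exists u0 : R, forall a b : R, u0 <= a -> a <= b -> g b <= g a) ->
  (forall v : R, 0 < v ->
     ((tailL P (sigma 0%N) (u * v) / tailL P (sigma 0%N) u - 1) / g u)
       @[u --> +oo] --> k v) ->
  (exists v : R, 0 < v /\ k v != 0 /\ forall u : R, 0 < u -> k (u * v) != k u) ->
  iid_seq sigma ->
  exists c : R, 0 < c /\
    \forall x \near +oo,
      ('E_P[fun w => ((sigma (first_exceed (fun i => sigma i) x w) w)^-1)%R]
         < (c * x^-1 * g x)%R%:E)%E.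
Proof.
move=> sigma0_gt0 tail_gt0 _ _ g_cvg0 [u0 g_noninc] ratio_cvg [v [v0 [kv _]]] iid.
pose S := survival P (sigma 0%N).
have S_gt0 u : 0 < S u by rewrite -lte_fin -survivalE.
have S_noninc := @survival_nonincreasing R d T P sigma.
have k_neq0 : exists2 v, 0 < v & k v != 0 by exists v.
have [C C0 [M [_ doubling]]] :=
  survival_double_ge S_gt0 S_noninc g_cvg0 g_noninc ratio_cvg k_neq0.
pose X := Num.max (Num.max u0 (M + 1)) 0.
have [u0X X0] : u0 <= X /\ 0 <= X by rewrite !le_max !lexx !orbT.
have MX : M < X by rewrite !lt_max ltrDl ltr01 orbT.
have decrement := survival_dyadic_decrement S_gt0 S_noninc g_cvg0 g_noninc C0 u0X X0
  (fun t Xt => doubling t (lt_le_trans MX Xt)).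
exists (4 * C + 1); split; first by rewrite addr_gt0 ?mulr_gt0.
exists X; split=> [|x /= Xx]; first exact: num_real.
have x0 : 0 < x := le_lt_trans X0 Xx.
have gx0 : 0 < g x :=
  g_gt0 (S := S) g_cvg0 g_noninc ratio_cvg k_neq0 (ltW (le_lt_trans u0X Xx)).
apply: le_lt_trans (expectation_inv_first_exceed_le iid sigma0_gt0 x0 (S_gt0 x)) _.
apply: le_lt_trans (_ : _ <= (4 * (C * g x) / x)%:E)%E _.
  apply: nneseries_dyadic_le => // m; apply/andP; split; last exact: decrement (ltW Xx).
  rewrite subr_ge0 ler_pdivrMr // mul1r; apply: S_noninc.
  by rewrite ler_peMr ?exprn_ege1 ?ler1n // ltW.
rewrite lte_fin -subr_gt0 (_ : _ - _ = g x / x); last by ring.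
by rewrite divr_gt0.
Qed.
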